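(* Under the setting below, for every $\epsilon>0$ there exists a positive integer $T(\epsilon)$ such that for every profile $\boldsymbol{\Psi}=(\Psi_1,\dots,\Psi_N)$ of stationary policies, every initial distribution of the states, and every $i\in\{1,\dots,N\}$, $$\big|V_i(\boldsymbol{\Psi})-V_i^{T(\epsilon)}(\boldsymbol{\Psi})\big|<\epsilon,$$ where for a positive integer $T$, $$V_i^{T}(\boldsymbol{\Psi}):=\frac1T\sum_{t=1}^{T}\sum_{(\boldsymbol{s},\boldsymbol{a})}\mathbb{P}^{\Psi_i}_t(s_i,a_i)\,w_i\Big(\prod_{j\ne i}\mathbb{P}^{\Psi_j}_t(s_j,a_j)\Big)\,v_i\big(U_i(\boldsymbol a)\big)$$ is the average prospect payoff of prosumer $i$ over the first $T$ steps when all prosumers follow $\boldsymbol\Psi$.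
   Context: There are $N$ prosumers. Prosumer $i$ has state set $\mathcal{S}_i=\{0,\dots,S_i^{\max}\}$, action set $\mathcal{A}_i=\mathcal{L}_i\times\mathcal{D}_i$ with $\mathcal{L}_i=\{0,\dots,L_i^{\max}\}$, $\mathcal{D}_i=\{0,\dots,D_i^{\max}\}$, and state dynamics $S_i(t+1)=\min\{[S_i(t)+G_i(t)+D_i(t)-L_i(t)]^+,S_i^{\max}\}$ where $A_i(t)=(L_i(t),D_i(t))$, $[x]^+=\max\{0,x\}$, and in state $s$ only actions $(l,d)$ with $0\le s+d-l\le S_i^{\max}$ are taken. The processes $(G_i(t))_{t\ge1}$, $i=1,\dots,N$, are mutually independent, each i.i.d. and $\mathbb{Z}$-valued with law $G_i$, and $\lambda_i:=\min_{|k|\le S_i^{\max}}\mathbb{P}\{G_i=k\}>0$ for all $i$. A stationary policy $\Psi_i$ draws $A_i(t)$ from a distribution $\Psi_i(\cdot\mid S_i(t))$ depending only on the current state; under a profile of stationary policies the state-action processes of different prosumers are independent, and $\mathbb{P}^{\Psi_j}_t(s,a):=\mathbb{P}^{\Psi_j}\{S_j(t)=s,A_j(t)=a\}$. $U_i(\boldsymbol a)\in\mathbb{R}$ is prosumer $i$'s instantaneous payoff for the joint action $\boldsymbol a$; $w_i:[0,1]\to\mathbb{R}$ is a continuous weighting function and $v_i:\mathbb{R}\to\mathbb{R}$ a valuation function. For a profile of stationary policies, $V_i(\boldsymbol\Psi):=\lim_{T\to\infty}V_i^T(\boldsymbol\Psi)$ (this limit exists and equals $\sum_{(\boldsymbol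 s,\boldsymbol a)}\pi^{\Psi_i}(s_i)\Psi_i(a_i|s_i)\,w_i\big(\prod_{j\ne i}\Psi_j(a_j|s_j)\pi^{\Psi_j}(s_j)\big)v_i(U_i(\boldsymbol a))$, where $\pi^{\Psi_j}$ is the unique stationary distribution of prosumer $j$'s state chain under $\Psi_j$). The sums range over all joint states $\boldsymbol s\in\prod_j\mathcal{S}_j$ and joint actions $\boldsymbol a\in\prod_j\mathcal{A}_j$. *)

From Stdlib Require Import Reals ZArith.
From mathcomp Require Import ssreflect ssrfun ssrbool eqtype ssrnat seq
  choice fintype finfun bigop.
Set Implicit Arguments. Unset Strict Implicit. Unset Printing Implicit Defensive.

Definition State (Smax : nat) : finType := 'I_Smax.+1.
(* Action set A_j = L_j x D_j, with L_j = {0..Lmax j}, D_j = {0..Dmax j};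
   an action is a pair (l, d). *)
Definition Act (Lmax Dmax : nat) : finType := ('I_Lmax.+1 * 'I_Dmax.+1)%type.

Notation "\rsum_ ( i : T ) F" := (\big[Rplus/R0]_(i : T) F)
  (at level 41, F at level 41, i, T at level 50).

Definition admissible (Smax : nat) (s : nat) (l d : nat) : bool :=
  (l <= s + d)%N && (s + d - l <= Smax)%N.

Definition next_state (Smax : nat) (s l d : nat) (k : Z) : Z :=
  Z.min (Z.max 0 (Z.of_nat s + k + Z.of_nat d - Z.of_nat l)) (Z.of_nat Smax).

(* Enumeration of Z by nat-indexed pairs: k = n and k = -(n+1). *)
Definition Zsum_term (f : Z -> R) (n : nat) : R :=
  (f (Z.of_nat n) + f (- (Z.of_nat n + 1))%Z)%R.

Definition is_pmf_Z (g : Z -> R) : Prop :=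
  (forall k, 0 <= g k)%R /\ infinite_sum (Zsum_term g) 1%R.

(* One-step transition probability of the state chain of a prosumer:
   P{ S(t+1) = s' | S(t) = s, A(t) = (l,d) } = sum_k g(k) [next_state = s']. *)
Definition is_kernel (Smax Lmax Dmax : nat) (g : Z -> R)
    (K : State Smax -> Act Lmax Dmax -> State Smax -> R) : Prop :=
  forall (s : State Smax) (a : Act Lmax Dmax) (s' : State Smax),
    infinite_sum
      (Zsum_term (fun k =>
         if Z.eqb (next_state Smax s a.1 a.2 k) (Z.of_nat s') then g k else 0%R))
      (K s a s').

Definition is_distr (T : finType) (mu : T -> R) : Prop :=
  (forall x, 0 <= mu x)%R /\ \rsum_(x : T) mu x = 1%R.

Definition is_policy (Smax Lmax Dmax : nat)
    (Psi : State Smax -> Act Lmax Dmax -> R) : Prop :=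
  (forall s, is_distr (Psi s)) /\
  (forall (s : State Smax) (a : Act Lmax Dmax),
     ~~ admissible Smax s a.1 a.2 -> Psi s a = 0%R).

(* Distribution of S(t+1) (i.e. n = t, n = 0 is time 1) given the initial
   distribution mu0 of S(1). *)
Fixpoint state_distr (Smax Lmax Dmax : nat)
    (K : State Smax -> Act Lmax Dmax -> State Smax -> R)
    (Psi : State Smax -> Act Lmax Dmax -> R) (mu0 : State Smax -> R)
    (n : nat) : State Smax -> R :=
  match n with
  | O => mu0
  | S m => fun s' =>
      \rsum_(s : State Smax) \rsum_(a : Act Lmax Dmax)
        (state_distr K Psi mu0 m s * Psi s a * K s a s')%R
  end.

(* P^{Psi}_t(s,a) = P{S(t) = s, A(t) = a}, for t = n+1. *)
Definition sa_prob (Smax Lmax Dmax : nat)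
    (K : State Smax -> Act Lmax Dmax -> State Smax -> R)
    (Psi : State Smax -> Act Lmax Dmax -> R) (mu0 : State Smax -> R)
    (n : nat) (s : State Smax) (a : Act Lmax Dmax) : R :=
  (state_distr K Psi mu0 n s * Psi s a)%R.

Definition JointSA (N : nat) (Smax Lmax Dmax : 'I_N -> nat) : finType :=
  {dffun forall j : 'I_N, (State (Smax j) * Act (Lmax j) (Dmax j))%type}.
Definition JointAct (N : nat) (Lmax Dmax : 'I_N -> nat) : Type :=
  forall j : 'I_N, Act (Lmax j) (Dmax j).

Definition continuous_on_01 (w : R -> R) : Prop :=
  forall x, (0 <= x <= 1)%R -> forall eps, (0 < eps)%R ->
    exists delta, (0 < delta)%R /\
      forall y, (0 <= y <= 1)%R -> (Rabs (y - x) < delta)%R ->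
        (Rabs (w y - w x) < eps)%R.

Definition VT (N : nat) (Smax Lmax Dmax : 'I_N -> nat)
    (K : forall j : 'I_N, State (Smax j) -> Act (Lmax j) (Dmax j) -> State (Smax j) -> R)
    (U : 'I_N -> JointAct Lmax Dmax -> R)
    (w v : 'I_N -> R -> R)
    (Psi : forall j : 'I_N, State (Smax j) -> Act (Lmax j) (Dmax j) -> R)
    (mu0 : forall j : 'I_N, State (Smax j) -> R)
    (i : 'I_N) (T : nat) : R :=
  (/ INR T *
   \big[Rplus/R0]_(t < T)
     \rsum_(x : JointSA Smax Lmax Dmax)
       (sa_prob (K i) (Psi i) (mu0 i) t (x i).1 (x i).2 *
        w i (\big[Rmult/R1]_(j < N | j != i)
               sa_prob (K j) (Psi j) (mu0 j) t (x j).1 (x j).2) *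
        v i (U i (fun j => (x j).2))))%R.

(* Let lam > 0 be the least of the probabilities P{G_j = k}, |k| <= Smax_j.  For every
   admissible action, the jump that lands exactly on a prescribed next state has such a
   k, so under any stationary policy every entry of the state transition matrix of every
   prosumer is at least lam.  This Doeblin condition contracts the L1 distance between
   state distributions by the factor 1 - lam per step, so the marginals P_t converge at
   a geometric rate that does not depend on the policies or on the initial laws.  As the
   weights lie in [0,1] and w_i is uniformly continuous there, the stage payoffs f_t then
   settle uniformly: |f_t - f_M| <= delta for t >= M.  A Cesaro estimate puts both V_i and
   V_i^T within delta + O(M / T) of f_M, and finitely many prosumers yield a common T. *)

From Stdlib Require Import Reals ZArith Lra Lia.
From HB Require Import structures.
From mathcomp Require Import ssreflect ssrfun ssrbool eqtype ssrnat seq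
  choice fintype finfun bigop zify.

Set Implicit Arguments.
Unset Strict Implicit.
Unset Printing Implicit Defensive.

HB.instance Definition _ := Monoid.isComLaw.Build R R0 Rplus
  (fun a b c => esym (Rplus_assoc a b c)) Rplus_comm Rplus_0_l.
HB.instance Definition _ := Monoid.isComLaw.Build R R1 Rmult
  (fun a b c => esym (Rmult_assoc a b c)) Rmult_comm Rmult_1_l.
HB.instance Definition _ := Monoid.isMulLaw.Build R R0 Rmult Rmult_0_l Rmult_0_r.
HB.instance Definition _ :=
  Monoid.isAddLaw.Build R Rmult Rplus Rmult_plus_distr_r Rmult_plus_distr_l.

Open Scope R_scope.

Section FiniteSums.
Variable T : finType.
Implicit Types f g : T -> R.

Lemma rsum_le f g : (forall x, f x <= g x) -> \rsum_(x : T) f x <= \rsum_(x : T) g x.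
Proof. by move=> fg; apply: (big_ind2 Rle) => *; [lra | apply: Rplus_le_compat | apply: fg]. Qed.

Lemma rsum_ge0 f : (forall x, 0 <= f x) -> 0 <= \rsum_(x : T) f x.
Proof.
by move=> f0; apply: (big_ind (Rle 0)) => *; [lra | apply: Rplus_le_le_0_compat | apply: f0].
Qed.

Lemma Rabs_rsum_le f : Rabs (\rsum_(x : T) f x) <= \rsum_(x : T) Rabs (f x).
Proof.
apply: (big_ind2 (fun a b => Rabs a <= b)) => [|a b c d ? ?|x _]; last lra.
- by rewrite Rabs_R0; lra.
- by apply: (Rle_trans _ _ _ (Rabs_triang _ _)); lra.
Qed.

Lemma rsum_opp f : \rsum_(x : T) - f x = - \rsum_(x : T) f x.
Proof. by rewrite (big_morph Ropp Ropp_plus_distr Ropp_0). Qed.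

Lemma rsum_const c : \rsum_(x : T) c = INR #|T| * c.
Proof.
rewrite big_const; elim: #|T| => [|n IH]; first by rewrite /=; ring.
by rewrite [iter _ _ _]/= IH S_INR; ring.
Qed.

Lemma rsum_ge_term f y : (forall x, 0 <= f x) -> f y <= \rsum_(x : T) f x.
Proof.
move=> f0; rewrite (bigD1 y) //=.
have : 0 <= \big[Rplus/R0]_(x | x != y) f x.
  by apply: (big_ind (Rle 0)) => *; [lra | apply: Rplus_le_le_0_compat | apply: f0].
lra.
Qed.

Lemma rsum_delta y c : \rsum_(x : T) (if x == y then c else 0) = c.
Proof. by rewrite (bigD1 y) //= eqxx big1 ?Rplus_0_r // => x /negbTE ->. Qed.

End FiniteSums.

Lemma infinite_sum_ge_term (f : nat -> R) l m :
  (forall n, 0 <= f n) -> infinite_sum f l -> f m <= l.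
Proof.
move=> f0 fl; apply: (Rle_trans _ _ _ _ (sum_incr _ m _ fl f0)).
case: m => [|m] /=; first lra.
have := cond_pos_sum f m f0; lra.
Qed.

Lemma infinite_sum_big (I : Type) (r : seq I) (F : I -> nat -> R) (l : I -> R) :
  (forall i, infinite_sum (F i) (l i)) ->
  infinite_sum (fun n => \big[Rplus/R0]_(i <- r) F i n) (\big[Rplus/R0]_(i <- r) l i).
Proof.
move=> Fl; elim: r => [|i r IH].
  rewrite big_nil => eps eps0; exists 0%nat => n _.
  rewrite (PartSum.sum_eq _ (fun _ => 0) n); last by move=> k _; rewrite big_nil.
  by rewrite sum_cte /R_dist Rmult_0_l Rminus_0_r Rabs_R0.
rewrite big_cons; apply: (Un_cv_ext
  (fun n => sum_f_R0 (F i) n + sum_f_R0 (fun n => \big[Rplus/R0]_(j <- r) F j n) n)).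
  by move=> n; rewrite -plus_sum; apply: PartSum.sum_eq => k _; rewrite big_cons.
exact: CV_plus (Fl i) IH.
Qed.

Lemma Zsum_term_ge0 (h : Z -> R) n : (forall k, 0 <= h k) -> 0 <= Zsum_term h n.
Proof.
by move=> h0; rewrite /Zsum_term; have := h0 (Z.of_nat n); have := h0 (- (Z.of_nat n + 1))%Z; lra.
Qed.

Lemma Zsum_term_ge_val (h : Z -> R) k : (forall k, 0 <= h k) -> exists n, h k <= Zsum_term h n.
Proof.
move=> h0; rewrite /Zsum_term; case: (Z_le_gt_dec 0 k) => k0.
  by exists (Z.to_nat k); rewrite Z2Nat.id //; have := h0 (- (k + 1))%Z; lra.
exists (Z.to_nat (- k - 1)); rewrite Z2Nat.id; last lia.
have -> : (- (- k - 1 + 1))%Z = k by ring.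
have := h0 (- k - 1)%Z; lra.
Qed.

Section TransitionKernel.
Variables (Smax Lmax Dmax : nat) (g : Z -> R).
Hypothesis g_pmf : is_pmf_Z g.
Variable K : State Smax -> Act Lmax Dmax -> State Smax -> R.
Hypothesis K_kernel : is_kernel g K.

Let jump_mass (s : State Smax) (a : Act Lmax Dmax) (s' : State Smax) (k : Z) :=
  if Z.eqb (next_state Smax s a.1 a.2 k) (Z.of_nat s') then g k else 0.

Let jump_mass_ge0 s a s' k : 0 <= jump_mass s a s' k.
Proof. by rewrite /jump_mass; case: Z.eqb; [apply: g_pmf.1 | lra]. Qed.

(* Each jump [k] moves the state to exactly one [s'], as [next_state] is clamped to [0..Smax]. *)
Let jump_mass_sum s a k : \rsum_(s' : State Smax) jump_mass s a s' k = g k.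
Proof.
set z := next_state Smax s a.1 a.2 k.
have z_range : (0 <= z <= Z.of_nat Smax)%Z by rewrite /z /next_state; lia.
pose y : State Smax := inord (Z.to_nat z).
have yE : nat_of_ord y = Z.to_nat z by rewrite inordK //; apply/ltP; lia.
rewrite -(rsum_delta y (g k)); apply: eq_bigr => s' _.
rewrite /jump_mass -/z; case: Z.eqb_spec => zs'; case: eqP => s'y //.
- by case: s'y; apply: ord_inj; rewrite yE zs' Nat2Z.id.
- by case: zs'; rewrite s'y yE Z2Nat.id //; lia.
Qed.

Lemma kernel_sum1 s a : \rsum_(s' : State Smax) K s a s' = 1.
Proof.
have sum_jumps n : \rsum_(s' : State Smax) Zsum_term (jump_mass s a s') n = Zsum_term g n.
  by rewrite /Zsum_term big_split /= !jump_mass_sum.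
apply: (uniqueness_sum (Zsum_term g)); last exact: g_pmf.2.
apply: (Un_cv_ext _ _ _ _ (infinite_sum_big _ (fun s' => K_kernel s a s'))) => n.
by apply: PartSum.sum_eq => m _; apply: sum_jumps.
Qed.

(* The jump [s' - (s + d - l)] lands exactly on [s'] and has modulus at most [Smax]. *)
Lemma kernel_ge_lower_bound lam (s : State Smax) (a : Act Lmax Dmax) (s' : State Smax) :
  (forall k, (Z.abs k <= Z.of_nat Smax)%Z -> lam <= g k) ->
  admissible Smax s a.1 a.2 -> lam <= K s a s'.
Proof.
move=> g_ge_lam /andP[/leP la /leP ad]; have /ltP s'_le := ltn_ord s'.
set k := (Z.of_nat s' - Z.of_nat (s + a.2 - a.1))%Z.
have jump_k : jump_mass s a s' k = g k.
  rewrite /jump_mass /next_state /k.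
  have -> : Z.min (Z.max 0 (Z.of_nat s + (Z.of_nat s' - Z.of_nat (s + a.2 - a.1)) +
     Z.of_nat a.2 - Z.of_nat a.1)) (Z.of_nat Smax) = Z.of_nat s' by lia.
  by rewrite Z.eqb_refl.
have [n le_kn] := Zsum_term_ge_val k (jump_mass_ge0 s a s').
apply: (Rle_trans _ _ _ (g_ge_lam k ltac:(rewrite /k; lia))).
rewrite -jump_k; apply: Rle_trans le_kn _.
apply: infinite_sum_ge_term (K_kernel s a s') => m.
by apply: Zsum_term_ge0 => k'; apply: jump_mass_ge0.
Qed.

End TransitionKernel.

Definition dist_L1 (T : finType) (p q : T -> R) := \rsum_(s : T) Rabs (p s - q s).

Lemma Rabs_le_dist_L1 (T : finType) (p q : T -> R) s : Rabs (p s - q s) <= dist_L1 p q.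
Proof. by apply: (@rsum_ge_term _ (fun s => Rabs (p s - q s))) => x; apply: Rabs_pos. Qed.

Lemma dist_L1_le2 (T : finType) (p q : T -> R) : is_distr p -> is_distr q -> dist_L1 p q <= 2.
Proof.
move=> [p0 p1] [q0 q1].
apply: (Rle_trans _ (\rsum_(s : T) (p s + q s))); last by rewrite big_split /= p1 q1; lra.
apply: rsum_le => s; have := p0 s; have := q0 s.
by rewrite /Rabs; case: Rcase_abs; lra.
Qed.

Lemma distr_le1 (T : finType) (mu : T -> R) x : is_distr mu -> 0 <= mu x <= 1.
Proof. by case=> mu0 mu1; split; [apply: mu0 | rewrite -mu1; apply: rsum_ge_term]. Qed.

Section Doeblin.
Variables (T : finType) (P : T -> T -> R) (lam : R).
Hypothesis P_ge_lam : forall s s', lam <= P s s'.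
Hypothesis P_sum1 : forall s, \rsum_(s' : T) P s s' = 1.
Hypothesis lam_ge0 : 0 <= lam.

Definition push (p : T -> R) (s' : T) := \rsum_(s : T) p s * P s s'.

Lemma push_distr p : is_distr p -> is_distr (push p).
Proof.
case=> p0 p1; split => [s'|].
  by apply: rsum_ge0 => s; apply: Rmult_le_pos (p0 s) (Rle_trans _ _ _ lam_ge0 (P_ge_lam _ _)).
rewrite /push exchange_big -p1 /=; apply: eq_bigr => s _.
by rewrite -big_distrr /= P_sum1 Rmult_1_r.
Qed.

(* Subtracting [lam] from every entry of [P] does not change [push p - push q],
   because [p] and [q] have the same mass, and leaves rows of mass [1 - #|T| lam <= 1 - lam]. *)
Lemma dist_L1_push p q : \rsum_(s : T) p s = \rsum_(s : T) q s ->
  dist_L1 (push p) (push q) <= (1 - lam) * dist_L1 p q.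
Proof.
move=> pq_mass.
have push_diff s' : push p s' - push q s' = \rsum_(s : T) (p s - q s) * (P s s' - lam).
  rewrite (eq_bigr (fun s => p s * P s s' + (- (q s * P s s') + - lam * (p s + - q s))));
    last by move=> s _; ring.
  by rewrite !big_split /= -big_distrr /= big_split /= !rsum_opp pq_mass /push; ring.
apply: (Rle_trans _ (\rsum_(s : T) Rabs (p s - q s) * \rsum_(s' : T) (P s s' - lam))).
  rewrite /dist_L1; under eq_bigr do rewrite push_diff.
  apply: (Rle_trans _ _ _ (rsum_le (fun s' => Rabs_rsum_le _))).
  rewrite exchange_big /=; apply: rsum_le => s; rewrite big_distrr /=; apply: rsum_le => s'.
  by rewrite Rabs_mult (Rabs_right (P s s' - lam)) ?Rle_refl //; have := P_ge_lam s s'; lra.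
rewrite /dist_L1 big_distrr /=; apply: rsum_le => s.
rewrite big_split /= rsum_opp P_sum1 rsum_const.
have : 1 <= INR #|T| by apply: (le_INR 1); apply/leP; apply/card_gt0P; exists s.
have : 0 <= Rabs (p s - q s) by apply: Rabs_pos.
move=> pq0 T1; have : 0 <= (INR #|T| - 1) * lam by nra.
nra.
Qed.

End Doeblin.

Section PolicyChain.
Variables (Smax Lmax Dmax : nat) (lam : R).
Variable K : State Smax -> Act Lmax Dmax -> State Smax -> R.
Hypothesis K_sum1 : forall s a, \rsum_(s' : State Smax) K s a s' = 1.
Hypothesis K_ge_lam : forall (s : State Smax) (a : Act Lmax Dmax) (s' : State Smax),
  admissible Smax s a.1 a.2 -> lam <= K s a s'.
Hypothesis lam_01 : 0 <= lam <= 1.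
Variable Psi : State Smax -> Act Lmax Dmax -> R.
Hypothesis Psi_policy : is_policy Psi.

Definition policy_kernel (s s' : State Smax) := \rsum_(a : Act Lmax Dmax) Psi s a * K s a s'.

Lemma policy_kernel_sum1 s : \rsum_(s' : State Smax) policy_kernel s s' = 1.
Proof.
rewrite exchange_big /= -(Psi_policy.1 s).2; apply: eq_bigr => a _.
by rewrite -big_distrr /= K_sum1 Rmult_1_r.
Qed.

Lemma policy_kernel_ge_lam s s' : lam <= policy_kernel s s'.
Proof.
have -> : lam = \rsum_(a : Act Lmax Dmax) Psi s a * lam.
  by rewrite -big_distrl /= (Psi_policy.1 s).2 Rmult_1_l.
apply: rsum_le => a; case/boolP: (admissible Smax s a.1 a.2) => [adm | /Psi_policy.2 ->].
  by apply: Rmult_le_compat_l; [apply: (Psi_policy.1 s).1 | apply: K_ge_lam].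
by rewrite !Rmult_0_l; apply: Rle_refl.
Qed.

Lemma state_distr_succ mu n s' :
  state_distr K Psi mu n.+1 s' = push policy_kernel (state_distr K Psi mu n) s'.
Proof.
rewrite /push /policy_kernel /=; apply: eq_bigr => s _.
by rewrite big_distrr; apply: eq_bigr => a _ /=; ring.
Qed.

Lemma state_distr_distr mu n : is_distr mu -> is_distr (state_distr K Psi mu n).
Proof.
move=> mu_distr; elim: n => [|n IH] //.
have /push_distr push_n : is_distr (state_distr K Psi mu n) := IH.
have := push_n policy_kernel lam policy_kernel_ge_lam policy_kernel_sum1 lam_01.1.
case=> push0 push1; split => [s'|]; first by rewrite state_distr_succ.
by rewrite -push1; apply: eq_bigr => s' _; rewrite state_distr_succ.
Qed.

Lemma state_distr_add mu m n s :
  state_distr K Psi mu (n + m) s = state_distr K Psi (state_distr K Psi mu m) n s.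
Proof.
by elim: n s => [|n IH] s //=; apply: eq_bigr => s0 _; apply: eq_bigr => a _; rewrite IH.
Qed.

Lemma dist_L1_state_distr mu1 mu2 n : is_distr mu1 -> is_distr mu2 ->
  dist_L1 (state_distr K Psi mu1 n) (state_distr K Psi mu2 n) <= (1 - lam) ^ n * dist_L1 mu1 mu2.
Proof.
move=> mu1_distr mu2_distr; elim: n => [|n IH]; first by rewrite /=; lra.
have [_ mass1] := state_distr_distr n mu1_distr.
have [_ mass2] := state_distr_distr n mu2_distr.
rewrite /dist_L1; under eq_bigr do rewrite !state_distr_succ.
apply: (Rle_trans _ _ _ (dist_L1_push policy_kernel_ge_lam policy_kernel_sum1 lam_01.1 _)).
  by rewrite mass1 mass2.
by rewrite /= Rmult_assoc; apply: Rmult_le_compat_l => //; lra.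
Qed.

Lemma state_distr_cauchy mu t t' s : is_distr mu -> (t <= t')%N ->
  Rabs (state_distr K Psi mu t s - state_distr K Psi mu t' s) <= 2 * (1 - lam) ^ t.
Proof.
move=> mu_distr le_tt'; rewrite -(subnKC le_tt') state_distr_add.
have mu'_distr := state_distr_distr (t' - t) mu_distr.
apply: (Rle_trans _ _ _ (Rabs_le_dist_L1 _ _ s)).
apply: (Rle_trans _ _ _ (dist_L1_state_distr t mu_distr mu'_distr)).
have := dist_L1_le2 mu_distr mu'_distr.
have : 0 <= (1 - lam) ^ t by apply: pow_le; lra.
nra.
Qed.

Lemma sa_prob_01 mu t s a : is_distr mu -> 0 <= sa_prob K Psi mu t s a <= 1.
Proof.
move=> mu_distr; have := distr_le1 s (state_distr_distr t mu_distr).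
have := distr_le1 a (Psi_policy.1 s); rewrite /sa_prob; split; nra.
Qed.

Lemma sa_prob_cauchy mu t t' s a : is_distr mu -> (t <= t')%N ->
  Rabs (sa_prob K Psi mu t s a - sa_prob K Psi mu t' s a) <= 2 * (1 - lam) ^ t.
Proof.
move=> mu_distr le_tt'; have Psi_01 := distr_le1 a (Psi_policy.1 s).
rewrite /sa_prob -Rmult_minus_distr_r Rabs_mult (Rabs_right (Psi s a)); last lra.
have := state_distr_cauchy s mu_distr le_tt'.
have := Rabs_pos (state_distr K Psi mu t s - state_distr K Psi mu t' s); nra.
Qed.

End PolicyChain.

Lemma finite_pos_lower_bound (I : finType) (F : I -> R) : (forall i, 0 < F i) ->
  exists lam, 0 < lam <= 1 /\ forall i, lam <= F i.
Proof.
move=> F_pos; exists (\big[Rmin/1]_(i : I) F i); split.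
  elim: (index_enum I) => [|j r [lam0 lam1]]; rewrite ?big_nil ?big_cons; first lra.
  by split; [apply: Rmin_glb_lt | apply: Rle_trans (Rmin_r _ _) lam1].
move=> i; have : i \in index_enum I by rewrite mem_index_enum.
elim: (index_enum I) => // j r IH; rewrite in_cons big_cons => /orP[/eqP <- | /IH].
  exact: Rmin_l.
exact: Rle_trans (Rmin_r _ _).
Qed.

Lemma uniform_jump_lower_bound (N : nat) (Smax : 'I_N -> nat) (g : 'I_N -> Z -> R) :
  (forall i k, (Z.abs k <= Z.of_nat (Smax i))%Z -> 0 < g i k) ->
  exists lam, 0 < lam <= 1 /\
    forall i k, (Z.abs k <= Z.of_nat (Smax i))%Z -> lam <= g i k.
Proof.
move=> g_pos.
pose F (x : {i : 'I_N & 'I_(2 * Smax i).+1}) :=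
  g (tag x) (Z.of_nat (tagged x) - Z.of_nat (Smax (tag x)))%Z.
have [|lam [lam_01 lam_le]] := @finite_pos_lower_bound _ F.
  by case=> i m; rewrite /F /=; apply: g_pos; have /ltP := ltn_ord m; lia.
exists lam; split => // i k k_le.
have m_lt : (Z.to_nat (k + Z.of_nat (Smax i)) < (2 * Smax i).+1)%N by apply/ltP; lia.
have := lam_le (Tagged (fun i => 'I_(2 * Smax i).+1) (Ordinal m_lt)).
by rewrite /F /= Z2Nat.id; [rewrite Z.add_simpl_r | lia].
Qed.

Definition clamp01 (y : R) := Rmax 0 (Rmin 1 y).

Lemma clamp01_01 y : 0 <= clamp01 y <= 1.
Proof. by rewrite /clamp01 /Rmax /Rmin; repeat case: Rle_dec; lra. Qed.

Lemma clamp01_id y : 0 <= y <= 1 -> clamp01 y = y.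
Proof. by rewrite /clamp01 /Rmax /Rmin; repeat case: Rle_dec; lra. Qed.

Lemma clamp01_lipschitz x y : Rabs (clamp01 y - clamp01 x) <= Rabs (y - x).
Proof. by rewrite /clamp01 /Rmax /Rmin; repeat case: Rle_dec; split_Rabs; lra. Qed.

(* Precomposing with the clamp turns continuity on [0,1] into continuity on R,
   so that Stdlib's compactness results for [continuity_pt] apply. *)
Lemma continuity_pt_clamp01 (w : R -> R) x :
  continuous_on_01 w -> continuity_pt (fun y => w (clamp01 y)) x.
Proof.
move=> w_cont eps eps0.
have [delta [delta0 w_close]] := w_cont (clamp01 x) (clamp01_01 x) eps eps0.
exists delta; split => // y [_ yx]; rewrite /R_dist /= in yx *.
apply: w_close; first exact: clamp01_01.
by apply: Rle_lt_trans (clamp01_lipschitz x y) _.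
Qed.

Lemma continuous_on_01_bounded (w : R -> R) : continuous_on_01 w ->
  exists Wb, forall y, 0 <= y <= 1 -> Rabs (w y) <= Wb.
Proof.
move=> w_cont; have cont c : 0 <= c <= 1 -> continuity_pt (fun y => w (clamp01 y)) c.
  by move=> _; apply: continuity_pt_clamp01.
have [ymax [w_le _]] := continuity_ab_maj _ 0 1 ltac:(lra) cont.
have [ymin [w_ge _]] := continuity_ab_min _ 0 1 ltac:(lra) cont.
exists (Rabs (w (clamp01 ymax)) + Rabs (w (clamp01 ymin))) => y y01.
have := w_le y y01; have := w_ge y y01; rewrite /= (clamp01_id y01) => w_ge_y w_le_y.
split_Rabs; lra.
Qed.

Lemma continuous_on_01_uniform (w : R -> R) : continuous_on_01 w ->
  forall eps, 0 < eps -> exists delta, 0 < delta /\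
    forall x y, 0 <= x <= 1 -> 0 <= y <= 1 -> Rabs (x - y) < delta -> Rabs (w x - w y) < eps.
Proof.
move=> w_cont eps eps0.
have [delta w_close] := Heine_cor2 (fun c (_ : 0 <= c <= 1) => continuity_pt_clamp01 c w_cont)
  (mkposreal eps eps0).
exists delta; split => [|x y x01 y01 xy]; first exact: cond_pos.
by have := w_close x y x01 y01 xy; rewrite /= !clamp01_id.
Qed.

Lemma prod_01 (I : finType) (P : pred I) (a : I -> R) :
  (forall i, 0 <= a i <= 1) -> 0 <= \big[Rmult/R1]_(i | P i) a i <= 1.
Proof. by move=> a01; apply: (big_ind (fun x => 0 <= x <= 1)) => // [|x y *]; lra || nra. Qed.

(* Telescoping: [a i * x - b i * y = (a i - b i) * x + b i * (x - y)]. *)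
Lemma Rabs_prod_sub_le (I : finType) (P : pred I) (a b : I -> R) eta :
  (forall i, 0 <= a i <= 1) -> (forall i, 0 <= b i <= 1) ->
  (forall i, Rabs (a i - b i) <= eta) ->
  Rabs (\big[Rmult/R1]_(i | P i) a i - \big[Rmult/R1]_(i | P i) b i) <= INR #|I| * eta.
Proof.
move=> a01 b01 ab_close.
have [_ [_ prod_close]] : (0 <= \big[Rmult/R1]_(i | P i) a i <= 1) /\
    (0 <= \big[Rmult/R1]_(i | P i) b i <= 1) /\
    Rabs (\big[Rmult/R1]_(i | P i) a i - \big[Rmult/R1]_(i | P i) b i) <=
    \big[Rplus/R0]_(i | P i) eta.
  apply: (big_rec3 (fun x y z => 0 <= x <= 1 /\ 0 <= y <= 1 /\ Rabs (x - y) <= z)).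
    by rewrite Rminus_diag Rabs_R0; lra.
  move=> i x y z _ [x01 [y01 xy]]; have := a01 i; have := b01 i.
  move=> bi ai; split; [nra | split; [nra |]].
  have -> : a i * x - b i * y = (a i - b i) * x + b i * (x - y) by ring.
  apply: (Rle_trans _ _ _ (Rabs_triang _ _)).
  rewrite !Rabs_mult (Rabs_right x) ?(Rabs_right (b i)); try lra.
  have := ab_close i; have := Rabs_pos (a i - b i); have := Rabs_pos (x - y); nra.
apply: (Rle_trans _ _ _ prod_close); rewrite big_mkcond -rsum_const.
apply: rsum_le => i; case: (P i); first exact: Rle_refl.
exact: Rle_trans (Rabs_pos _) (ab_close i).
Qed.

Lemma eventually_div_INR_lt C eps : 0 < eps ->
  exists N, (0 < N)%N /\ forall T, (N <= T)%N -> C / INR T < eps.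
Proof.
move=> eps0; have C0 := Rabs_pos C; set q := eps / (Rabs C + 1).
have q0 : 0 < q by apply: Rdiv_lt_0_compat; lra.
have [N [N_small /ltP N0]] := archimed_cor1 q q0.
exists N; split => // T /leP NT.
have T_inv0 : 0 < / INR T by apply: Rinv_0_lt_compat; apply: lt_0_INR; lia.
have T_inv : / INR T < q.
  apply: (Rle_lt_trans _ _ _ _ N_small).
  by apply: Rinv_le_contravar; [apply: lt_0_INR; lia | apply: le_INR].
have : (Rabs C + 1) * q = eps by rewrite /q; field; lra.
have := Rle_abs C; rewrite /Rdiv; nra.
Qed.

Section CesaroAverage.
Variables (f : nat -> R) (B delta : R) (M : nat).
Hypothesis f_bounded : forall t, Rabs (f t) <= B.
Hypothesis f_settled : forall t, (M <= t)%N -> Rabs (f t - f M) <= delta.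

Let average T := / INR T * \big[Rplus/R0]_(t < T) f t.

(* Before time [M] each deviation is at most [2 B], from time [M] on at most [delta]. *)
Let sum_deviation_le T :
  \big[Rplus/R0]_(t < T) Rabs (f t - f M) <= 2 * B * INR (minn T M) + delta * INR T.
Proof.
have delta0 : 0 <= delta by have := f_settled (leqnn M); have := Rabs_pos (f M - f M); lra.
have dev_le t : Rabs (f t - f M) <= 2 * B.
  apply: (Rle_trans _ _ _ (Rabs_triang _ _)); rewrite Rabs_Ropp.
  by have := f_bounded t; have := f_bounded M; lra.
elim: T => [|T IH]; first by rewrite big_ord0 min0n /=; have := dev_le 0%N; lra.
rewrite big_ord_recr S_INR /=.
move: (\big[Rplus/R0]_(t < T) _) IH => sum_T IH; case: (ltnP T M) => [lt_TM | le_MT].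
  rewrite (minn_idPl lt_TM) (minn_idPl (ltnW lt_TM)) S_INR in IH *.
  by have := dev_le T; lra.
rewrite (minn_idPr le_MT) (minn_idPr (leq_trans le_MT (leqnSn T))) in IH *.
by have := f_settled le_MT; lra.
Qed.

Lemma average_close T : (0 < T)%N ->
  Rabs (average T - f M) <= delta + 2 * B * INR M / INR T.
Proof.
move=> /ltP T0; have T_pos : 0 < INR T by apply: lt_0_INR.
have B0 : 0 <= B by have := f_bounded 0%N; have := Rabs_pos (f 0%N); lra.
have -> : average T - f M = / INR T * \big[Rplus/R0]_(t < T) (f t - f M).
  rewrite /average /Rminus big_split /= rsum_const card_ord; field; lra.
rewrite Rabs_mult Rabs_inv (Rabs_right (INR T)); last lra.
apply: (Rle_trans _ (/ INR T * (2 * B * INR M + delta * INR T))).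
  apply: Rmult_le_compat_l; first by left; apply: Rinv_0_lt_compat.
  apply: (Rle_trans _ _ _ (Rabs_rsum_le _)); apply: Rle_trans (sum_deviation_le T) _.
  have : INR (minn T M) <= INR M by apply: le_INR; apply/leP; apply: geq_minr.
  nra.
by apply: Req_le; field; lra.
Qed.

Lemma limit_close Vi : Un_cv (fun T => average T.+1) Vi -> Rabs (Vi - f M) <= delta.
Proof.
move=> average_cv; apply: le_epsilon => eps eps0.
have [N1 [_ N1_small]] := eventually_div_INR_lt (2 * B * INR M) (ltac:(lra) : 0 < eps / 2).
have [N2 N2_close] := average_cv (eps / 2) ltac:(lra).
set T := maxn N1 N2; rewrite /R_dist in N2_close.
have := N2_close T ltac:(by apply/leP; apply: leq_maxr).
have := N1_small T.+1 ltac:(by apply: leq_trans (leq_maxl N1 N2) (leqnSn _)).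
have := average_close (ltn0Sn T).
move: (average T.+1) => avg; split_Rabs; lra.
Qed.

Lemma limit_average_close Vi T : Un_cv (fun T => average T.+1) Vi -> (0 < T)%N ->
  Rabs (Vi - average T) <= 2 * delta + 2 * B * INR M / INR T.
Proof.
move=> average_cv T0; have := limit_close average_cv; have := average_close T0.
move: (average T) => avg; split_Rabs; lra.
Qed.

End CesaroAverage.

Lemma eventually_forall_finite (I : finType) (P : I -> nat -> Prop) :
  (forall i, exists n, forall m, (n <= m)%N -> P i m) ->
  exists n, forall i m, (n <= m)%N -> P i m.
Proof.
move=> P_ev; suff [n Pn] : exists n, forall i, i \in index_enum I -> forall m, (n <= m)%N -> P i m.
  by exists n => i; apply: Pn; rewrite mem_index_enum.
elim: (index_enum I) => [|i r [n Pn]]; first by exists 0%N.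
have [ni Pni] := P_ev i; exists (maxn ni n) => j; rewrite in_cons => /orP[/eqP -> | j_r] m le_m.
  by apply: Pni; apply: leq_trans le_m; apply: leq_maxl.
by apply: Pn => //; apply: leq_trans le_m; apply: leq_maxr.
Qed.

Lemma Rabs_mul_sub_mul_le a a' y y' c Y eta e :
  0 <= a' <= 1 -> Rabs y <= Y -> Rabs (a - a') <= eta -> Rabs (y - y') <= e ->
  Rabs (a * y * c - a' * y' * c) <= (eta * Y + e) * Rabs c.
Proof.
move=> a'01 y_le aa' yy'.
have -> : a * y * c - a' * y' * c = ((a - a') * y + a' * (y - y')) * c by ring.
rewrite Rabs_mult; apply: Rmult_le_compat_r; first exact: Rabs_pos.
apply: (Rle_trans _ _ _ (Rabs_triang _ _)); rewrite !Rabs_mult (Rabs_right a'); last lra.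
have := Rabs_pos (a - a'); have := Rabs_pos y; have := Rabs_pos (y - y').
have : Rabs (a - a') * Rabs y <= eta * Y by apply: Rmult_le_compat => //; apply: Rabs_pos.
nra.
Qed.

Section ProspectPayoff.
(* Keep the prosumer index of [K], [K_sum1] and [K_ge_lam] explicit. *)
Unset Implicit Arguments.
Variables (N : nat) (Smax Lmax Dmax : 'I_N -> nat) (lam : R).
Variable K : forall j : 'I_N, State (Smax j) -> Act (Lmax j) (Dmax j) -> State (Smax j) -> R.
Hypothesis K_sum1 : forall j (s : State (Smax j)) (a : Act (Lmax j) (Dmax j)),
  \rsum_(s' : State (Smax j)) K j s a s' = 1.
Hypothesis K_ge_lam :
  forall j (s : State (Smax j)) (a : Act (Lmax j) (Dmax j)) (s' : State (Smax j)),
  admissible (Smax j) s a.1 a.2 -> lam <= K j s a s'.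
Hypothesis lam_01 : 0 < lam <= 1.
Variable U : 'I_N -> JointAct Lmax Dmax -> R.
Variables w v : 'I_N -> R -> R.
Hypothesis w_cont : forall i, continuous_on_01 (w i).
Set Implicit Arguments.

Let lam_ge0_le1 : 0 <= lam <= 1. Proof. lra. Qed.

Definition stage_payoff Psi mu0 i t :=
  \rsum_(x : JointSA Smax Lmax Dmax)
    (sa_prob (K i) (Psi i) (mu0 i) t (x i).1 (x i).2 *
     w i (\big[Rmult/R1]_(j < N | j != i) sa_prob (K j) (Psi j) (mu0 j) t (x j).1 (x j).2) *
     v i (U i (fun j => (x j).2))).

Lemma sa_prob_eventually_close eta : 0 < eta -> exists M, forall j Pj mj,
  is_policy Pj -> is_distr mj -> forall t s a, (M <= t)%N ->
  Rabs (sa_prob (K j) Pj mj t s a - sa_prob (K j) Pj mj M s a) <= eta.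
Proof.
move=> eta0; have [|M small] := pow_lt_1_zero (1 - lam) _ (eta / 2) ltac:(lra).
  by rewrite Rabs_right; lra.
exists M => j Pj mj Pj_pol mj_distr t s a le_Mt; rewrite Rabs_minus_sym.
apply: (Rle_trans _ _ _
  (sa_prob_cauchy (K_sum1 j) (K_ge_lam j) lam_ge0_le1 Pj_pol s a mj_distr le_Mt)).
by have := small M (le_n M); rewrite Rabs_right; [lra | apply: Rle_ge; apply: pow_le; lra].
Qed.

Let sa_prob_01_at j Pj mj t s a : is_policy Pj -> is_distr mj ->
  0 <= sa_prob (K j) Pj mj t s a <= 1.
Proof. by move=> Pj_pol; apply: (sa_prob_01 (K_sum1 j) (K_ge_lam j) lam_ge0_le1 Pj_pol). Qed.

Lemma stage_payoff_bounded i : exists B, forall Psi mu0,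
  (forall j, is_policy (Psi j)) -> (forall j, is_distr (mu0 j)) ->
  forall t, Rabs (stage_payoff Psi mu0 i t) <= B.
Proof.
have [Wb w_le] := continuous_on_01_bounded (w_cont i).
exists (Wb * \rsum_(x : JointSA Smax Lmax Dmax) Rabs (v i (U i (fun j => (x j).2)))).
have term_le a y c : 0 <= a <= 1 -> Rabs y <= Wb -> Rabs (a * y * c) <= Wb * Rabs c.
  move=> a01 y_le; rewrite !Rabs_mult (Rabs_right a); last lra.
  have : a * Rabs y <= Wb by have := Rabs_pos y; nra.
  by have := Rabs_pos c; nra.
move=> Psi mu0 Psi_pol mu0_distr t; rewrite big_distrr /=.
apply: (Rle_trans _ _ _ (Rabs_rsum_le _)); apply: rsum_le => x; apply: term_le.
  exact: sa_prob_01_at.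
apply: w_le; apply: prod_01 => j; exact: sa_prob_01_at.
Qed.

Lemma stage_payoff_settles i delta : 0 < delta -> exists M, forall Psi mu0,
  (forall j, is_policy (Psi j)) -> (forall j, is_distr (mu0 j)) ->
  forall t, (M <= t)%N -> Rabs (stage_payoff Psi mu0 i t - stage_payoff Psi mu0 i M) <= delta.
Proof.
move=> delta0; have [Wb w_le] := continuous_on_01_bounded (w_cont i).
have Wb0 : 0 <= Wb by have := w_le 0 ltac:(lra); have := Rabs_pos (w i 0); lra.
set Vs := \rsum_(x : JointSA Smax Lmax Dmax) Rabs (v i (U i (fun j => (x j).2))).
have Vs0 : 0 <= Vs by apply: rsum_ge0 => x; apply: Rabs_pos.
set e := delta / (2 * (Vs + 1)).
have e_Vs : 2 * e * (Vs + 1) = delta by rewrite /e; field; lra.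
have e0 : 0 < e by apply: Rdiv_lt_0_compat; lra.
have [dw [dw0 w_unif]] := continuous_on_01_uniform (w_cont i) e0.
have N0 := pos_INR N.
set eta := Rmin (e / (Wb + 1)) (dw / (INR N + 1)).
have eta0 : 0 < eta by apply: Rmin_glb_lt; apply: Rdiv_lt_0_compat; lra.
have eta_Wb : eta * Wb <= e.
  have : eta <= e / (Wb + 1) := Rmin_l _ _.
  have : e / (Wb + 1) * (Wb + 1) = e by field; lra.
  nra.
have N_eta : INR N * eta < dw.
  have : eta <= dw / (INR N + 1) := Rmin_r _ _.
  have : dw / (INR N + 1) * (INR N + 1) = dw by field; lra.
  nra.
have [M sa_close] := sa_prob_eventually_close eta0.
exists M => Psi mu0 Psi_pol mu0_distr t le_Mt.
have sa01 j t' (x : JointSA Smax Lmax Dmax) :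
    0 <= sa_prob (K j) (Psi j) (mu0 j) t' (x j).1 (x j).2 <= 1 by apply: sa_prob_01_at.
rewrite /stage_payoff /Rminus -rsum_opp -big_split /=.
apply: (Rle_trans _ _ _ (Rabs_rsum_le _)).
apply: (Rle_trans _ (\rsum_(x : JointSA Smax Lmax Dmax)
  (eta * Wb + e) * Rabs (v i (U i (fun j => (x j).2))))).
  apply: rsum_le => x; apply: Rabs_mul_sub_mul_le.
  - exact: sa01.
  - by apply: w_le; apply: prod_01 => j; apply: sa01.
  - exact: sa_close.
  left; apply: w_unif; try by apply: prod_01 => j; apply: sa01.
  apply: (Rle_lt_trans _ (INR #|'I_N| * eta)); last by rewrite card_ord.
  by apply: Rabs_prod_sub_le => j; [apply: sa01 | apply: sa01 | apply: sa_close].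
rewrite -big_distrr /= -/Vs; nra.
Qed.

Lemma VT_eventually_close i eps : 0 < eps -> exists Ti, forall T0, (Ti <= T0)%N ->
  forall Psi mu0, (forall j, is_policy (Psi j)) -> (forall j, is_distr (mu0 j)) ->
  forall Vi, Un_cv (fun T => VT K U w v Psi mu0 i (S T)) Vi ->
  Rabs (Vi - VT K U w v Psi mu0 i T0) < eps.
Proof.
move=> eps0; have [B B_bound] := stage_payoff_bounded i.
have [M settles] := stage_payoff_settles i (ltac:(lra) : 0 < eps / 4).
have [Ti [Ti0 Ti_small]] := eventually_div_INR_lt (2 * B * INR M) (ltac:(lra) : 0 < eps / 2).
exists Ti => T0 le_T0 Psi mu0 Psi_pol mu0_distr Vi VT_cv.
have VT_close := limit_average_close (B_bound Psi mu0 Psi_pol mu0_distr)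
  (settles Psi mu0 Psi_pol mu0_distr) VT_cv (leq_trans Ti0 le_T0).
by apply: (Rle_lt_trans _ _ _ VT_close); have := Ti_small T0 le_T0; lra.
Qed.

End ProspectPayoff.

Theorem lemma2
  (N : nat) (Smax Lmax Dmax : 'I_N -> nat)
  (g : 'I_N -> Z -> R)
  (Hg : forall i, is_pmf_Z (g i))
  (Hlambda : forall i (k : Z), (Z.abs k <= Z.of_nat (Smax i))%Z -> (0 < g i k)%R)
  (K : forall j : 'I_N, State (Smax j) -> Act (Lmax j) (Dmax j) -> State (Smax j) -> R)
  (HK : forall j, is_kernel (g j) (K j))
  (U : 'I_N -> JointAct Lmax Dmax -> R)
  (w v : 'I_N -> R -> R)
  (Hw : forall i, continuous_on_01 (w i)) :
  forall eps : R, (0 < eps)%R ->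
  exists T0 : nat, (0 < T0)%N /\
    forall (Psi : forall j : 'I_N, State (Smax j) -> Act (Lmax j) (Dmax j) -> R)
           (mu0 : forall j : 'I_N, State (Smax j) -> R),
      (forall j, is_policy (Psi j)) ->
      (forall j, is_distr (mu0 j)) ->
      forall (i : 'I_N) (Vi : R),
        Un_cv (fun T => VT K U w v Psi mu0 i (S T)) Vi ->
        (Rabs (Vi - VT K U w v Psi mu0 i T0) < eps)%R.
Proof.
move=> eps eps0.
have [lam [lam_01 g_ge_lam]] := uniform_jump_lower_bound Hlambda.
have K_sum1 j := kernel_sum1 (Hg j) (HK j).
have K_ge_lam j s a s' := kernel_ge_lower_bound (Hg j) (HK j) (s := s) (a := a) s' (g_ge_lam j).
have [n VT_close] := eventually_forall_finite
  (fun i => VT_eventually_close K_sum1 K_ge_lam lam_01 U v Hw i eps0).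
exists n.+1; split => // Psi mu0 Psi_pol mu0_distr i.
exact: VT_close.
Qed.
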